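(* Let $k\geq 3$ and let $G$ be a diregular $(2,k,+3)$-digraph. Let $u,v$ be distinct vertices of $G$ having exactly one common out-neighbour $u_2$, and write $N^+(u)=\{u_1,u_2\}$, $N^+(v)=\{v_1,u_2\}$. Then $v_1 \in O(u)$ and $u_1 \in O(v)$.
   Context: A digraph is $k$-geodetic if for every ordered pair of vertices $x,y$ there is at most one directed path from $x$ to $y$ of length at most $k$ (the trivial path of length $0$ counts, so there are no directed cycles of length at most $k$). $M(d,k)=1+d+\dots+d^k$. A diregular $(d,k,+\epsilon)$-digraph is a $k$-geodetic digraph of order $M(d,k)+\epsilon$ in which every vertex has in-degree and out-degree exactly $d$. $N^+(x)$ is the set of out-neighbours of $x$. The distance $d(x,y)$ is the length of a shortest directed path from $x$ to $y$ ($\infty$ if none). The outlier set of a vertex $x$ is $O(x)=\{y\in V(G): d(x,y)\geq k+1\}$; in a diregular $(2,k,+3)$-digraph, $|O(x)|=3$ for every $x$. *)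

From mathcomp Require Import all_boot.
Set Implicit Arguments. Unset Strict Implicit. Unset Printing Implicit Defensive.

Definition moore (d k : nat) : nat := \sum_(i < k.+1) d ^ i.

Definition walk_from_to (V : finType) (e : rel V) (x y : V) (p : seq V) : Prop :=
  path e x p /\ last x p = y.

(* k-geodetic: at most one directed path of length <= k between any ordered pair.
   (Paths are encoded as vertex sequences; walks of length <= k that are not
   paths would contain a cycle of length <= k, which k-geodeticity excludes,
   so quantifying over walks is the same notion.) *)
Definition k_geodetic (V : finType) (e : rel V) (k : nat) : Prop :=
  forall (x y : V) (p q : seq V),
    walk_from_to e x y p -> size p <= k ->
    walk_from_to e x y q -> size q <= k -> p = q.

Definition out_nbhd (V : finType) (e : rel V) (x : V) : {set V} := [set y | e x y].
Definition in_nbhd (V : finType) (e : rel V) (x : V) : {set V} := [set y | e y x].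

Definition diregular (V : finType) (e : rel V) (d : nat) : Prop :=
  forall x : V, #|out_nbhd e x| = d /\ #|in_nbhd e x| = d.

Definition diregular_dk_eps (V : finType) (e : rel V) (d k eps : nat) : Prop :=
  [/\ k_geodetic e k, diregular e d & #|V| = moore d k + eps].

Definition dist_le (V : finType) (e : rel V) (x y : V) (n : nat) : Prop :=
  exists p : seq V, walk_from_to e x y p /\ size p <= n.

Definition outlier (V : finType) (e : rel V) (k : nat) (x y : V) : Prop :=
  ~ dist_le e x y k.

(* Write k = n + 3 and B_r(x) for the set of vertices at distance at most r from x.
   Since G is k-geodetic, balls of radius r < k are Moore trees with M(2,r) vertices,
   and the balls of radius k - 1 around two distinct out-neighbours of a vertex are
   disjoint and avoid that vertex. Hence T_u = {u} + B_{k-1}(u1) and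
   T_v = {v} + B_{k-1}(v1) both have M(2,k-1) + 1 vertices and miss B_{k-1}(u2), which
   has M(2,k-1) vertices. As |V| = M(2,k) + 3 = 2 M(2,k-1) + 4, at most three vertices
   of T_u lie outside T_v.
   If d(u,v1) <= k, then v1 lies in B_{k-1}(u1). Let w be the predecessor of v1 on a
   u1-v1 walk of length at most k - 1 and w' its other out-neighbour; if w <> u1, let
   q be the predecessor of w on that walk and r its other out-neighbour. Depending on
   whether w = u1, whether r is in T_v and whether u is in T_v, four distinct vertices
   of T_u outside T_v can be found among w, w', u1, u, r and the out-neighbours of w'
   or of r. The claim for v and u1 is symmetric. *)

From mathcomp Require Import all_boot zify.
Set Implicit Arguments. Unset Strict Implicit. Unset Printing Implicit Defensive.

Lemma mooreS d k : moore d k.+1 = (d * moore d k).+1.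
Proof.
rewrite /moore big_ord_recl expn0 add1n big_distrr /=; congr _.+1.
by apply: eq_bigr => i _; rewrite expnS.
Qed.

Lemma mem_out_nbhd (V : finType) (e : rel V) x y : (y \in out_nbhd e x) = e x y.
Proof. by rewrite inE. Qed.

Section Balls.
Variables (V : finType) (e : rel V).

Fixpoint ball (n : nat) (x : V) : {set V} :=
  if n is m.+1 then x |: \bigcup_(y in out_nbhd e x) ball m y else [set x].

Lemma ballP n x y : reflect (dist_le e x y n) (y \in ball n x).
Proof.
elim: n x y => [|n IH] x y /=.
  rewrite inE; apply: (iffP eqP) => [->|]; first by exists [::].
  by case=> [[|z p]] [[_ <-] //].
rewrite in_setU1; apply: (iffP predU1P) => [[->|]|].
- by exists [::].
- case/bigcupP=> z; rewrite mem_out_nbhd => exz /IH [p [[xp <-] sp]].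
  by exists (z :: p); rewrite /walk_from_to /= exz.
- case=> [[|z p]] [[/= xp <-] sp]; first by left.
  right; case/andP: xp => exz zp; apply/bigcupP; exists z; first by rewrite mem_out_nbhd.
  by apply/IH; exists p.
Qed.

Lemma walk_cons x y z p : e x y -> walk_from_to e y z p -> walk_from_to e x z (y :: p).
Proof. by rewrite /walk_from_to /= => -> []. Qed.

Lemma walk_rcons x y z p : walk_from_to e x y p -> e y z -> walk_from_to e x z (rcons p z).
Proof. by case=> xp <- eyz; rewrite /walk_from_to rcons_path last_rcons xp eyz. Qed.

Lemma ball_center n x : x \in ball n x.
Proof. by apply/ballP; exists [::]. Qed.

Lemma ball_le m n x y : m <= n -> y \in ball m x -> y \in ball n x.
Proof.
by move=> mn /ballP [p [xp sp]]; apply/ballP; exists p; rewrite (leq_trans sp).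
Qed.

Lemma ball_out n x y z : e x y -> z \in ball n y -> z \in ball n.+1 x.
Proof.
move=> exy /ballP [p [yp sp]]; apply/ballP; exists (y :: p).
by split; [apply: walk_cons exy yp | ].
Qed.

Lemma ball_out1 n x y : e x y -> y \in ball n.+1 x.
Proof. by move/ball_out; apply; apply: ball_center. Qed.

Lemma ball_out2 n x y z : e x y -> e y z -> z \in ball n.+2 x.
Proof. by move=> exy /ball_out1 /(ball_out exy). Qed.

Lemma ball_succ n x y z : y \in ball n x -> e y z -> z \in ball n.+1 x.
Proof.
move=> /ballP [p [xp sp]] eyz; apply/ballP; exists (rcons p z).
by rewrite size_rcons; split; [apply: walk_rcons xp eyz | ].
Qed.

Lemma ball_last_step n x y : y \in ball n.+1 x -> y != x -> exists2 w, w \in ball n x & e w y.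
Proof.
case/ballP=> p [[]]; case/lastP: p => [|p z] xp; first by move=> <-; rewrite eqxx.
rewrite last_rcons size_rcons => <- sp _; move: xp; rewrite rcons_path => /andP [xp ez].
by exists (last x p) => //; apply/ballP; exists p.
Qed.

Lemma ball_first_step n x y : y \in ball n.+1 x -> y = x \/ exists2 z, e x z & y \in ball n z.
Proof.
rewrite /= in_setU1 => /predU1P [->|/bigcupP [z]]; first by left.
by rewrite mem_out_nbhd; right; exists z.
Qed.

Section Geodetic.
Variable k : nat.
Hypothesis geo : k_geodetic e k.

Lemma ball_out_inj m m' x y z a : m < k -> m' < k -> e x y -> e x z ->
  a \in ball m y -> a \in ball m' z -> y = z.
Proof.
move=> mk m'k exy exz /ballP [p [yp sp]] /ballP [q [zq sq]].
have [-> _] : y :: p = z :: q.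
  by apply: (@geo x a); [apply: walk_cons | apply: leq_ltn_trans mk
                        | apply: walk_cons | apply: leq_ltn_trans m'k].
by [].
Qed.

Lemma ball_out_notin m x y : m < k -> e x y -> x \notin ball m y.
Proof.
move=> mk exy; apply/ballP => -[p [yp sp]].
have := @geo x x (y :: p) [::] (walk_cons exy yp) (leq_ltn_trans sp mk).
by move=> /(_ (conj erefl erefl) (leq0n k)).
Qed.

Lemma ball_frontier_out m x y z : m.+1 < k ->
  y \in ball m.+1 x -> y \notin ball m x -> e y z -> z \notin ball m.+1 x.
Proof.
move=> mk /ballP [p [xp sp]] yfar eyz; apply/ballP => -[q [xq sq]].
have sp1 : size p = m.+1.
  apply/eqP; rewrite eqn_leq sp ltnNge; apply: contra yfar => sm.
  by apply/ballP; exists p.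
have := @geo x z (rcons p z) q (walk_rcons xp eyz) _ xq (ltnW (leq_ltn_trans sq mk)).
rewrite size_rcons sp1 => /(_ mk) pq.
by move: sq; rewrite -pq size_rcons sp1 ltnn.
Qed.

Lemma disjoint_branches m m' x y z : m < k -> m' < k -> e x y -> e x z -> y != z ->
  [disjoint x |: ball m y & ball m' z].
Proof.
move=> mk m'k exy exz yz; apply/pred0P => a /=; rewrite in_setU1.
have [->|_] /= := eqVneq a x; first exact/negbTE/ball_out_notin.
apply/negbTE/negP => /andP [ay az]; case/eqP: yz.
exact: (ball_out_inj mk m'k exy exz ay az).
Qed.

Lemma ball_sibling_notin m x y z : m < k -> e x y -> e x z -> y != z -> z \notin ball m y.
Proof.
move=> mk exy exz; apply: contra_neqN => zy.
exact: (ball_out_inj mk (leq_ltn_trans (leq0n m) mk) exy exz zy (ball_center _ _)).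
Qed.

Hypothesis reg : diregular e 2.

Lemma out_nbhd_pair x : exists c1 c2, [/\ c1 != c2, e x c1 & e x c2].
Proof.
have /eqP/cards2P [a [b [ab xab]]] := (reg x).1.
by exists a, b; split; rewrite // -mem_out_nbhd xab ?set21 ?set22.
Qed.

Lemma other_out x y : exists2 y', e x y' & y' != y.
Proof.
have [c1 [c2 [c12 e1 e2]]] := out_nbhd_pair x.
by case: (eqVneq y c1) => [->|yc1]; [exists c2 | exists c1]; rewrite // eq_sym.
Qed.

Lemma card_ball n x : n < k -> #|ball n x| = moore 2 n.
Proof.
elim: n x => [|n IH] x nk; first by rewrite cards1 /moore big_ord1.
have /eqP/cards2P [a [b [ab xab]]] := (reg x).1.
have [ea eb] : e x a /\ e x b by split; rewrite -mem_out_nbhd xab ?set21 ?set22.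
have nk' := ltnW nk.
have -> : ball n.+1 x = (x |: ball n a) :|: ball n b.
  by rewrite /= xab big_setU1 ?inE // big_set1 setUA.
rewrite cardsU disjoint_setI0 ?disjoint_branches // cards0 subn0.
by rewrite cardsU1 ball_out_notin // !IH // mooreS; lia.
Qed.

Lemma card_branch m x y : m < k -> e x y -> #|x |: ball m y| = (moore 2 m).+1.
Proof. by move=> mk exy; rewrite cardsU1 ball_out_notin // card_ball. Qed.

End Geodetic.
End Balls.

Section Outlier.
Variables (V : finType) (e : rel V) (n : nat).
Hypotheses (geo : k_geodetic e n.+3) (reg : diregular e 2).
Hypothesis cardV : #|V| = moore 2 n.+3 + 3.
Variables (u v u1 u2 v1 : V).
Hypotheses (uv : u != v) (euu1 : e u u1) (euu2 : e u u2) (evv1 : e v v1) (evu2 : e v u2).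
Hypotheses (u1u2 : u1 != u2) (v1u2 : v1 != u2) (u1v1 : u1 != v1).

Local Notation Tu := (u |: ball e n.+2 u1).
Local Notation Tv := (v |: ball e n.+2 v1).

Lemma card_TuDTv : #|Tu :\: Tv| <= 3.
Proof.
have disj : (Tu :|: Tv) :&: ball e n.+2 u2 = set0.
  by rewrite setIUl !disjoint_setI0 ?setU0 // (disjoint_branches geo).
have := max_card (Tu :|: Tv :|: ball e n.+2 u2).
rewrite cardsU disj cards0 subn0.
have := cardsUI Tu Tv; have := cardsID Tv Tu.
by rewrite !(card_branch geo reg) // (card_ball geo reg) // cardV !mooreS; lia.
Qed.

Lemma TuDTv_no4 a b c d : uniq [:: a; b; c; d] ->
  a \in Tu :\: Tv -> b \in Tu :\: Tv -> c \in Tu :\: Tv -> d \in Tu :\: Tv -> False.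
Proof.
move=> abcd aD bD cD dD; suff : 4 <= 3 by [].
rewrite -[4](card_uniqP abcd); apply: leq_trans card_TuDTv.
by apply/subset_leq_card/subsetP => z; rewrite !in_cons in_nil orbF => /or4P [] /eqP ->.
Qed.

Lemma mem_TuDTv x : x != v -> x \notin ball e n.+2 v1 -> x \in ball e n.+2 u1 ->
  x \in Tu :\: Tv.
Proof.
move=> xv xv1 xu1.
by rewrite in_setD (in_setU1 _ v) (in_setU1 _ u) negb_or xv xv1 xu1 orbT.
Qed.

Lemma children_TuDTv_contra y a b : a != b -> a \in Tu :\: Tv -> b \in Tu :\: Tv ->
  (forall c, e y c -> [&& c \in Tu :\: Tv, a != c & b != c]) -> False.
Proof.
move=> ab aD bD yD; have [c1 [c2 [c12 ec1 ec2]]] := out_nbhd_pair reg y.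
have /and3P [c1D ac1 bc1] := yD _ ec1; have /and3P [c2D ac2 bc2] := yD _ ec2.
by apply: (TuDTv_no4 _ aD bD c1D c2D); rewrite /= !inE !negb_or ab ac1 ac2 bc1 bc2 c12.
Qed.

Lemma u1_neq_v : u1 != v.
Proof.
apply: (contraTneq _ (ball_out1 n.+1 evu2)) => <-.
exact: (ball_sibling_notin geo _ euu1 euu2 u1u2).
Qed.

Lemma v1_mem_ball_u1 : (forall y, e u y -> y = u1 \/ y = u2) ->
  dist_le e u v1 n.+3 -> v1 \in ball e n.+2 u1.
Proof.
move=> outu /ballP /ball_first_step [v1u | [z /outu [->|->] // v1z]].
  by move: (ball_sibling_notin geo (ltnSn _) evv1 evu2 v1u2); rewrite v1u ball_out1.
by move: (ball_sibling_notin geo (ltnSn _) evu2 evv1); rewrite eq_sym v1u2 v1z => /(_ isT).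
Qed.

Section Predecessor.
Variables w w' : V.
Hypotheses (wu1 : w \in ball e n.+1 u1) (ewv1 : e w v1) (eww' : e w w') (w'v1 : w' != v1).

Lemma pred_TuDTv : w \in Tu :\: Tv.
Proof.
apply: mem_TuDTv; last exact: ball_le (leqnSn _) wu1.
- apply: (contraNneq _ (ball_sibling_notin geo (ltnSn _) euu1 euu2 u1u2)) => wv.
  by apply: ball_succ wu1 _; rewrite wv.
- exact: (ball_out_notin geo (ltnSn _) ewv1).
Qed.

Lemma sibling_TuDTv : w' \in Tu :\: Tv.
Proof.
apply: mem_TuDTv; last exact: ball_succ wu1 eww'.
- apply: (contraNneq _ (ball_sibling_notin geo (ltnSn _) eww' ewv1 w'v1)) => w'v.
  by rewrite w'v ball_out1.
- by apply: (ball_sibling_notin geo (ltnSn _) ewv1 eww'); rewrite eq_sym.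
Qed.

Lemma pred_neq_sibling : w != w'.
Proof.
apply: (contraNneq _ (ball_out_notin geo (ltn0Sn _) eww')) => <-.
exact: ball_center.
Qed.

Lemma pred_root_contra : w = u1 -> False.
Proof.
move=> wu1e.
apply: (children_TuDTv_contra (y := w') pred_neq_sibling pred_TuDTv sibling_TuDTv) => c ew'c.
apply/and3P; split.
- apply: mem_TuDTv; last by rewrite -wu1e; apply: ball_out2 eww' ew'c.
  + apply: (contraNneq _ (ball_sibling_notin geo (ltnSn _) eww' ewv1 w'v1)) => cv.
    by apply: ball_out2 ew'c _; rewrite cv.
  + apply/negP => cv1; case/eqP: w'v1.
    exact: (ball_out_inj (m := 1) geo isT (ltnSn _) eww' ewv1 (ball_out1 0 ew'c) cv1).
- apply: (contraNneq _ (ball_out_notin geo (m := 1) isT eww')) => ->.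
  exact: ball_out1.
- apply: (contraNneq _ (ball_out_notin geo (ltn0Sn _) ew'c)) => ->.
  exact: ball_center.
Qed.

Section Sibling.
Variables q r : V.
Hypotheses (qu1 : q \in ball e n u1) (eqw : e q w) (eqr : e q r) (rw : r != w).

Lemma sibling_balls_contra m m' a : m < n.+3 -> m' < n.+3 ->
  a \in ball e m r -> a \in ball e m' w -> False.
Proof.
by move=> mk m'k ar aw; case/eqP: rw; exact: (ball_out_inj geo mk m'k eqr eqw ar aw).
Qed.

Lemma sibling_in_Tv_contra : r \in Tv -> False.
Proof.
move=> rTv; have ru1 := ball_succ qu1 eqr.
have rv : r != v.
  apply/eqP => rv.
  apply: (sibling_balls_contra (m := 1) (m' := 1) isT isT _ (ball_out1 0 ewv1)).
  by rewrite rv ball_out1.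
have rv1 : r \in ball e n.+2 v1 by move: rTv; rewrite in_setU1 (negPf rv).
have rfar : r \notin ball e n.+1 v1.
  apply/negP => /(ball_out ewv1).
  exact: (sibling_balls_contra (ltn0Sn _) (ltnSn _) (ball_center _ 0 r)).
apply: (children_TuDTv_contra (y := r) pred_neq_sibling pred_TuDTv sibling_TuDTv) => c erc.
apply/and3P; split.
- apply: mem_TuDTv; last exact: ball_succ ru1 erc.
  + apply/eqP => cv.
    apply: (sibling_balls_contra (m := 2) (m' := 1) isT isT _ (ball_out1 0 ewv1)).
    by apply: ball_out2 erc _; rewrite cv.
  + exact: (ball_frontier_out geo (ltnSn _) rv1 rfar erc).
- apply/eqP => wc.
  apply: (sibling_balls_contra (m := 1) (m' := 0) isT isT _ (ball_center _ 0 w)).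
  by rewrite wc ball_out1.
- apply/eqP => w'c.
  apply: (sibling_balls_contra (m := 1) (m' := 1) isT isT _ (ball_out1 0 eww')).
  by rewrite w'c ball_out1.
Qed.

Lemma sibling_notin_Tv_contra : w != u1 -> r \notin Tv -> False.
Proof.
move=> wnu1 rTv; have ru1 := ball_succ qu1 eqr.
have rD : r \in Tu :\: Tv.
  by rewrite in_setD rTv (in_setU1 _ u) (ball_le (leqnSn _) ru1) orbT.
have rw' : r != w'.
  apply/eqP => rw'.
  apply: (sibling_balls_contra (m' := 1) (ltn0Sn _) isT (ball_center _ 0 r)).
  by rewrite rw' ball_out1.
have w'nu1 : w' != u1.
  by apply: (contraTneq _ wu1) => <-; exact: (ball_out_notin geo (leqnSn _) eww').
have rnu1 : r != u1.
  apply: (contraTneq _ (ball_le (leqnSn _) qu1)) => <-.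
  exact: (ball_out_notin geo (leqnSn _) eqr).
have [uTv | uTv] := boolP (u \in Tv).
  have uv1 : u \in ball e n.+2 v1 by move: uTv; rewrite in_setU1 (negPf uv).
  have ufar : u \notin ball e n.+1 v1.
    apply: (contra _ (ball_sibling_notin geo (ltnSn _) evv1 evu2 v1u2)) => uv1'.
    exact: ball_succ uv1' euu2.
  have u1D := mem_TuDTv u1_neq_v (ball_frontier_out geo (ltnSn _) uv1 ufar euu1)
                                 (ball_center _ _ _).
  apply: (TuDTv_no4 _ pred_TuDTv sibling_TuDTv rD u1D).
  rewrite /= !inE !negb_or pred_neq_sibling (eq_sym w r) rw wnu1 (eq_sym w' r) rw'.
  by rewrite w'nu1 rnu1.
have uD : u \in Tu :\: Tv by rewrite in_setD uTv setU11.
have neq_u x : x \in ball e n.+2 u1 -> x != u.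
  move=> xu1; apply: (contraTneq _ xu1) => ->.
  exact: (ball_out_notin geo (ltnSn _) euu1).
apply: (TuDTv_no4 _ pred_TuDTv sibling_TuDTv rD uD).
rewrite /= !inE !negb_or pred_neq_sibling (eq_sym w r) rw (eq_sym w' r) rw' /=.
by rewrite !neq_u ?(ball_le (leqnSn _) wu1) ?(ball_succ wu1 eww') ?(ball_le (leqnSn _) ru1).
Qed.

End Sibling.

Lemma pred_nonroot_contra : w != u1 -> False.
Proof.
move=> wnu1; have [q qu1 eqw] := ball_last_step wu1 wnu1.
have [r eqr rw] := other_out reg q w.
have [rTv | rTv] := boolP (r \in Tv).
  exact: sibling_in_Tv_contra qu1 eqw eqr rw rTv.
exact: sibling_notin_Tv_contra qu1 eqw eqr rw wnu1 rTv.
Qed.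

End Predecessor.

Lemma outlier_other_child : (forall y, e u y -> y = u1 \/ y = u2) -> outlier e n.+3 u v1.
Proof.
move=> outu /(v1_mem_ball_u1 outu) v1u1.
have [w wu1 ewv1] : exists2 w, w \in ball e n.+1 u1 & e w v1.
  by apply: ball_last_step v1u1 _; rewrite eq_sym.
have [w' eww' w'v1] := other_out reg w v1.
have [wu1e | wnu1] := eqVneq w u1.
  exact: pred_root_contra wu1 ewv1 eww' w'v1 wu1e.
exact: pred_nonroot_contra wu1 ewv1 eww' w'v1 wnu1.
Qed.

End Outlier.

Theorem theorem3 (V : finType) (e : rel V) (k : nat) (u v u1 u2 v1 : V) :
  3 <= k ->
  diregular_dk_eps e 2 k 3 ->
  u != v ->
  out_nbhd e u = [set u1; u2] ->
  out_nbhd e v = [set v1; u2] ->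
  out_nbhd e u :&: out_nbhd e v = [set u2] ->
  outlier e k u v1 /\ outlier e k v u1.
Proof.
move=> k3 [geo reg cardV] uv Nu Nv Nuv.
have edgeE x a b y : out_nbhd e x = [set a; b] -> e x y = (y \in [set a; b]).
  by move=> Nx; rewrite -Nx mem_out_nbhd.
have neq2 x a b : out_nbhd e x = [set a; b] -> a != b.
  by move=> Nx; have := (reg x).1; rewrite Nx cards2; case: (a != b).
have u1v1 : u1 != v1.
  apply/eqP => u1v1; have : u1 \in out_nbhd e u :&: out_nbhd e v.
    by rewrite Nu Nv u1v1 in_setI set21.
  by rewrite Nuv => /set1P u1u2; move: (neq2 _ _ _ Nu); rewrite u1u2 eqxx.
have outP x a b : out_nbhd e x = [set a; b] -> forall y, e x y -> y = a \/ y = b.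
  by move=> Nx y; rewrite (edgeE _ _ _ _ Nx) => /set2P.
have [euu1 euu2] : e u u1 /\ e u u2 by rewrite !(edgeE _ _ _ _ Nu) set21 set22.
have [evv1 evu2] : e v v1 /\ e v u2 by rewrite !(edgeE _ _ _ _ Nv) set21 set22.
have [u1u2 v1u2] := (neq2 _ _ _ Nu, neq2 _ _ _ Nv).
case: k k3 geo cardV => [|[|[|n]]] // _ geo cardV; split.
  exact: (outlier_other_child geo reg cardV uv euu1 euu2 evv1 evu2 u1u2 v1u2 u1v1
                              (outP _ _ _ Nu)).
by apply: (outlier_other_child geo reg cardV _ evv1 evu2 euu1 euu2 v1u2 u1u2 _
                               (outP _ _ _ Nv)); rewrite eq_sym.
Qed.
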